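(* Let $n\ge 2$ and let $\mathcal{F}=\{f_i\}_{i=1}^k$ be a unit-norm tight frame for $\mathbb{R}^n$ (or $\mathbb{C}^n$). Suppose there exist an index set $I\subseteq\{1,\dots,k\}$ with $|I|=p$ and unit-norm vectors $g_1,\dots,g_q$ such that $\{f_i\}_{i\notin I}\cup\{g_j\}_{j=1}^q$ is a unit-norm tight frame. Then, writing $\tilde f_i$ for the diagram vector of $f_i$, the sum of all entries of the Gramian $(\langle\tilde f_j,\tilde f_i\rangle)_{i,j\notin I}$ of the $k-p$ remaining diagram vectors is at most $q^2$, i.e. $\sum_{i,j\notin I}\langle\tilde f_i,\tilde f_j\rangle\le q^2$.
   Context: A unit-norm tight frame is a sequence of unit vectors $\{h_i\}$ for which there is $\lambda>0$ with $\sum_i|\langle f,h_i\rangle|^2=\lambda\|f\|^2$ for all $f$. Diagram vectors: for $f\in\mathbb{R}^n$, $\tilde f=\frac{1}{\sqrt{n-1}}\,v\in\mathbb{R}^{n(n-1)}$, where $v$ has as entries the differences $f(i)^2-f(j)^2$ for each pair $i<j$ (each exactly once) together with the products $\sqrt{2n}\,f(i)f(j)$ for each pair $i<j$ (each exactly once). For $f\in\mathbb{C}^n$, $\tilde f=\frac{1}{\sqrt{n-1}}\,v\in\mathbb{C}^{3n(n-1)/2}$, where $v$ has as entries $f(i)\overline{f(i)}-f(j)\overline{f(j)}$ for each pair $i<j$ (each exactly once) together with $\sqrt{n}\,f(i)\overline{f(j)}$ for each ordered pair $i\neq j$ (each exactly once). *)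

From HB Require Import structures.
From mathcomp Require Import all_boot all_order all_algebra.
Set Implicit Arguments. Unset Strict Implicit. Unset Printing Implicit Defensive.
Import Order.TTheory GRing.Theory Num.Theory.
Local Open Scope ring_scope.

Definition pairs_lt (n : nat) := {p : 'I_n * 'I_n | (p.1 < p.2)%N}.
Definition pairs_neq (n : nat) := {p : 'I_n * 'I_n | p.1 != p.2}.

Section Real.
Variable R : rcfType.

Definition dotR (T : finType) (u v : T -> R) : R := \sum_(x : T) u x * v x.

Definition untfR (n : nat) (T : finType) (h : T -> 'I_n -> R) : Prop :=
  (forall t, dotR (h t) (h t) = 1) /\
  exists2 lam : R, 0 < lam &
    forall x : 'I_n -> R, \sum_(t : T) (dotR x (h t)) ^+ 2 = lam * dotR x x.

(* diagram vector in R^{n(n-1)}, entries indexed by (i<j) twice *)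
Definition diagR (n : nat) (f : 'I_n -> R) : pairs_lt n + pairs_lt n -> R :=
  fun e => match e with
  | inl p => (f (val p).1 ^+ 2 - f (val p).2 ^+ 2) / Num.sqrt (n.-1)%:R
  | inr p => Num.sqrt (2 * n)%:R * (f (val p).1 * f (val p).2) / Num.sqrt (n.-1)%:R
  end.
End Real.

Section Complex.
Variable C : numClosedFieldType.

Definition dotC (T : finType) (u v : T -> C) : C := \sum_(x : T) u x * (v x)^*.

Definition untfC (n : nat) (T : finType) (h : T -> 'I_n -> C) : Prop :=
  (forall t, dotC (h t) (h t) = 1) /\
  exists2 lam : C, 0 < lam &
    forall x : 'I_n -> C, \sum_(t : T) `|dotC x (h t)| ^+ 2 = lam * dotC x x.

(* diagram vector in C^{3n(n-1)/2}: entries indexed by (i<j) and by (i<>j) *)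
Definition diagC (n : nat) (f : 'I_n -> C) : pairs_lt n + pairs_neq n -> C :=
  fun e => match e with
  | inl p => (f (val p).1 * (f (val p).1)^* - f (val p).2 * (f (val p).2)^*)
               / sqrtC (n.-1)%:R
  | inr p => sqrtC n%:R * (f (val p).1 * (f (val p).2)^*) / sqrtC (n.-1)%:R
  end.
End Complex.

Definition replace_fam (V : Type) (k q : nat) (f : 'I_k -> V) (I : {set 'I_k})
  (g : 'I_q -> V) : {i : 'I_k | i \notin I} + 'I_q -> V :=
  fun e => match e with inl i => f (val i) | inr j => g j end.
Arguments replace_fam {V k q} f I g _.
Arguments untfR {R n T} h.
Arguments untfC {C n T} h.
Arguments dotR {R T} u v.
Arguments dotC {C T} u v.
Arguments diagR {R n} f _.
Arguments diagC {C n} f _.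

From HB Require Import structures.
From mathcomp Require Import all_boot all_order all_algebra.
From mathcomp Require Import ring.
Import Order.TTheory GRing.Theory Num.Theory.
Set Implicit Arguments. Unset Strict Implicit. Unset Printing Implicit Defensive.
Local Open Scope ring_scope.

(* For a unit-norm tight frame the frame operator is a multiple of the
   identity, which is exactly the statement that the diagram vectors of the
   frame sum to zero; and for n >= 2 the diagram map squares norms,
   |f~|^2 = |f|^4.  So the diagram vectors of the kept f_i sum to minus those
   of the g_j, and the Gram sum is |sum_j g~_j|^2 <= q sum_j |g~_j|^2 = q^2. *)

Section PairSums.
Variable V : zmodType.

Lemma big_sig (T : finType) (P : pred T) (F : T -> V) :
  \sum_(x : {x | P x}) F (val x) = \sum_(x | P x) F x.
Proof. exact: esym (big_sub P F). Qed.

Lemma sum_replace_fam (W : Type) (k q : nat) (f : 'I_k -> W) (I : {set 'I_k})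
    (g : 'I_q -> W) (F : W -> V) :
  \sum_e F (replace_fam f I g e) = \sum_(i | i \notin I) F (f i) + \sum_j F (g j).
Proof. by rewrite big_sumType /= (big_sig (fun i => i \notin I) (F \o f)). Qed.

Variable n : nat.
Implicit Type phi : 'I_n -> 'I_n -> V.

Lemma sum_pairs_neq phi :
  \sum_(p : pairs_neq n) phi (val p).1 (val p).2 =
  \sum_u \sum_v phi u v - \sum_u phi u u.
Proof.
apply/eqP; rewrite eq_sym subr_eq; apply/eqP.
rewrite (eq_bigr (fun u => phi u u + \sum_(v | v != u) phi u v)); last first.
  by move=> u _; rewrite (bigD1 u).
rewrite big_split /= addrC; congr (_ + _).
rewrite (big_sig (fun p => p.1 != p.2) (fun p => phi p.1 p.2)) pair_big_dep /=.
by apply: eq_bigl => p; rewrite eq_sym.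
Qed.

Lemma sum_pairs_neq_sym phi : (forall u v, phi u v = phi v u) ->
  \sum_(p : pairs_neq n) phi (val p).1 (val p).2 =
  (\sum_(p : pairs_lt n) phi (val p).1 (val p).2) *+ 2.
Proof.
move=> phiC.
rewrite (big_sig (fun p => p.1 != p.2) (fun p => phi p.1 p.2)).
rewrite (big_sig (fun p : 'I_n * 'I_n => (p.1 < p.2)%N) (fun p => phi p.1 p.2)).
rewrite (bigID (fun p : 'I_n * 'I_n => (p.1 < p.2)%N)) /= mulr2n; congr (_ + _).
  by apply: eq_bigl => -[u v] /=; rewrite andb_idl // => /ltn_eqF; rewrite -val_eqE => ->.
rewrite (reindex_inj (can_inj swap_pairK)) /=.
apply: eq_big => -[u v] /=; last by move=> _; rewrite phiC.
by rewrite -leqNgt ltn_neqAle eq_sym.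
Qed.

End PairSums.

Lemma sum_pairs_neq_mul (K : comPzRingType) (n : nat) (b : 'I_n -> K) :
  \sum_(p : pairs_neq n) b (val p).1 * b (val p).2 =
  (\sum_u b u) ^+ 2 - \sum_u b u ^+ 2.
Proof.
rewrite (sum_pairs_neq (fun u v => b u * b v)) expr2 mulr_suml.
by congr (_ - _); apply: eq_bigr => u _; rewrite mulr_sumr.
Qed.

Section DiagramNormIdentity.
Variables (K : numDomainType) (n : nat) (b : 'I_n -> K).

Lemma sum_pairs_lt_sqr_sub :
  \sum_(p : pairs_lt n) (b (val p).1 - b (val p).2) ^+ 2 =
  n%:R * \sum_u b u ^+ 2 - (\sum_u b u) ^+ 2.
Proof.
apply: (@pmulrnI _ 2) => //=.
rewrite -(sum_pairs_neq_sym (phi := fun u v => (b u - b v) ^+ 2)); last first.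
  by move=> u v; rewrite -opprB sqrrN.
rewrite (sum_pairs_neq (fun u v => (b u - b v) ^+ 2)) [X in _ - X]big1 ?subr0;
  last by move=> u _; rewrite subrr expr0n.
rewrite (eq_bigr (fun u => b u ^+ 2 *+ n - (b u * \sum_v b v) *+ 2
                           + \sum_v b v ^+ 2)); last first.
  move=> u _; rewrite (eq_bigr _ (fun v _ => sqrrB (b u) (b v))) !big_split /=.
  by rewrite sumr_const card_ord sumrN sumrMnl -mulr_sumr.
rewrite !big_split /= sumrN sumr_const card_ord !sumrMnl -mulr_suml.
rewrite -mulr_natl; ring.
Qed.

Lemma diagram_norm_identity :
  \sum_(p : pairs_lt n) (b (val p).1 - b (val p).2) ^+ 2
  + n%:R * \sum_(p : pairs_neq n) b (val p).1 * b (val p).2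
  = (n%:R - 1) * (\sum_u b u) ^+ 2.
Proof. rewrite sum_pairs_lt_sqr_sub sum_pairs_neq_mul; ring. Qed.

End DiagramNormIdentity.

Section Sesquilinear.
Variables (K : numDomainType) (conj : {rmorphism K -> K}).

Definition sdot (E : finType) (u v : E -> K) : K := \sum_e u e * conj (v e).

Lemma sdot_sum (E J1 J2 : finType) (P1 : pred J1) (P2 : pred J2)
    (x : J1 -> E -> K) (y : J2 -> E -> K) :
  sdot (fun e => \sum_(j | P1 j) x j e) (fun e => \sum_(l | P2 l) y l e) =
  \sum_(j | P1 j) \sum_(l | P2 l) sdot (x j) (y l).
Proof.
rewrite /sdot; under eq_bigr do rewrite rmorph_sum big_distrlr /=.
by rewrite exchange_big; apply: eq_bigr => j _; rewrite exchange_big.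
Qed.

Lemma sdotNN (E : finType) (u : E -> K) : sdot (fun e => - u e) (fun e => - u e) = sdot u u.
Proof. by apply: eq_bigr => e _; rewrite rmorphN mulrNN. Qed.

Lemma sdot_delta (n : nat) (u : 'I_n) (y : 'I_n -> K) :
  sdot (fun w => (w == u)%:R) y = conj (y u).
Proof.
rewrite /sdot (bigD1 u) //= eqxx mul1r big1 ?addr0 // => w /negbTE ->.
by rewrite mul0r.
Qed.

Lemma sdotDZl (E : finType) (x1 x2 y : E -> K) (a : K) :
  sdot (fun e => x1 e + a * x2 e) y = sdot x1 y + a * sdot x2 y.
Proof.
rewrite /sdot mulr_sumr -big_split; apply: eq_bigr => e _.
by rewrite mulrDl mulrA.
Qed.

Section Positive.
Hypothesis conj_ge0 : forall x, 0 <= x * conj x.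

Lemma sdot_sym_add_le (E : finType) (u v : E -> K) :
  sdot u v + sdot v u <= sdot u u + sdot v v.
Proof.
rewrite -subr_ge0.
have -> : sdot u u + sdot v v - (sdot u v + sdot v u) =
          \sum_e (u e - v e) * conj (u e - v e).
  by rewrite /sdot -!big_split -sumrB; apply: eq_bigr => e _ /=; rewrite rmorphB; ring.
exact: sumr_ge0.
Qed.

Lemma sdot_sum_le (E J : finType) (x : J -> E -> K) :
  sdot (fun e => \sum_j x j e) (fun e => \sum_j x j e) <=
  #|J|%:R * \sum_j sdot (x j) (x j).
Proof.
rewrite sdot_sum -(ler_pM2l (ltr0n K 2)).
have -> : 2%:R * \sum_j \sum_l sdot (x j) (x l) =
          \sum_j \sum_l (sdot (x j) (x l) + sdot (x l) (x j)).
  under [RHS]eq_bigr do rewrite big_split.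
  by rewrite big_split /= [X in _ + X]exchange_big mulr_natl mulr2n.
apply: le_trans (_ : \sum_j \sum_l (sdot (x j) (x j) + sdot (x l) (x l)) <= _).
  by do 2!apply: ler_sum => ? _; apply: sdot_sym_add_le.
under eq_bigr do rewrite big_split sumr_const /=.
by rewrite big_split /= sumr_const sumrMnl !mulr_natl mulr2n.
Qed.

Lemma sdot_sum_compl_le (E T : finType) (P : pred T) (q : nat)
    (x : T -> E -> K) (y : 'I_q -> E -> K) :
  (forall e, \sum_(t | P t) x t e + \sum_j y j e = 0) ->
  (forall j, sdot (y j) (y j) = 1) ->
  \sum_(i | P i) \sum_(j | P j) sdot (x j) (x i) <= (q ^ 2)%:R.
Proof.
move=> sum0 y1; rewrite exchange_big -sdot_sum.
have xy e : \sum_(t | P t) x t e = - \sum_j y j e by apply/eqP; rewrite -addr_eq0 sum0.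
rewrite /sdot; under eq_bigr do rewrite xy; rewrite -/(sdot _ _) sdotNN.
apply: le_trans (sdot_sum_le y) _.
by rewrite (eq_bigr _ (fun j _ => y1 j)) sumr_const card_ord natrX expr2 mulr_natr.
Qed.

End Positive.

Section TightFrame.
Hypothesis conjK : involutive conj.
Variables (n : nat) (T : finType) (h : T -> 'I_n -> K) (lam : K).
Hypothesis tight :
  forall x : 'I_n -> K, \sum_t sdot x (h t) * conj (sdot x (h t)) = lam * sdot x x.

Lemma tight_frame_diag u : \sum_t h t u * conj (h t u) = lam.
Proof.
have := tight (fun w => (w == u)%:R).
rewrite sdot_delta eqxx rmorph1 mulr1 => <-.
by apply: eq_bigr => t _; rewrite sdot_delta conjK mulrC.
Qed.

Lemma tight_frame_offdiag u v (a : K) : u != v ->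
  let P := \sum_t h t u * conj (h t v) in a * P + conj (a * P) = 0.
Proof.
(* Polarization: test tightness on the vector e_u + a e_v. *)
move=> uv P; have := tight (fun w => (w == u)%:R + a * (w == v)%:R).
rewrite sdotDZl !sdot_delta !eqxx (negbTE uv) eq_sym (negbTE uv) /=.
rewrite mulr0 addr0 add0r mulr1 rmorph1.
under eq_bigr do rewrite sdotDZl !sdot_delta.
have -> : \sum_t (conj (h t u) + a * conj (h t v)) * conj (conj (h t u) + a * conj (h t v))
  = \sum_t h t u * conj (h t u) + a * conj a * \sum_t h t v * conj (h t v)
    + (a * P + conj (a * P)).
  rewrite rmorphM rmorph_sum /P !mulr_sumr -!big_split; apply: eq_bigr => t _ /=.
  by rewrite rmorphD !rmorphM !conjK; ring.
rewrite !tight_frame_diag => e.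
by apply: (addrI (lam + a * conj a * lam)); rewrite addr0 e; ring.
Qed.

End TightFrame.
End Sesquilinear.

Section RealFrames.
Variable R : rcfType.

Lemma dotR_sdot (E : finType) (u v : E -> R) : dotR u v = sdot idfun u v.
Proof. by []. Qed.

Lemma untfR_frame_operator (n : nat) (T : finType) (h : T -> 'I_n -> R) :
  untfR h -> exists lam : R, forall u v, \sum_t h t u * h t v = lam * (u == v)%:R.
Proof.
case=> _ [lam _ tight]; exists lam => u v.
have idK : involutive (idfun : {rmorphism R -> R}) by [].
have {}tight x :
    \sum_t sdot idfun x (h t) * idfun (sdot idfun x (h t)) = lam * sdot idfun x x.
  by rewrite -tight; apply: eq_bigr => t _; rewrite expr2.
case: eqVneq => [<-|uv]; first by rewrite mulr1 (tight_frame_diag idK tight).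
have /= := tight_frame_offdiag idK tight 1 uv.
by rewrite mul1r -mulr2n mulr0 => /eqP; rewrite mulrn_eq0 => /eqP.
Qed.

Lemma diagR_sum_eq0 (n : nat) (T : finType) (h : T -> 'I_n -> R) :
  untfR h -> forall e, \sum_t diagR (h t) e = 0.
Proof.
case/untfR_frame_operator=> lam frameE [p|p] /=; rewrite -mulr_suml.
  rewrite sumrB; under eq_bigr do rewrite expr2; under [X in _ - X]eq_bigr do rewrite expr2.
  by rewrite !frameE !eqxx subrr mul0r.
have uv : (val p).1 != (val p).2 by rewrite neq_ltn (valP p).
by rewrite -mulr_sumr frameE (negbTE uv) !mulr0 mul0r.
Qed.

Lemma dotR_diagR (n : nat) (g : 'I_n -> R) : (2 <= n)%N ->
  dotR (diagR g) (diagR g) = dotR g g ^+ 2.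
Proof.
move=> n2; set s : R := Num.sqrt (n.-1)%:R; set c : R := Num.sqrt (2 * n)%:R.
have s2 : s ^+ 2 = n%:R - 1 by rewrite sqr_sqrtr ?ler0n // -subn1 natrB // ltnW.
have c2 : c ^+ 2 = 2%:R * n%:R by rewrite sqr_sqrtr ?ler0n // natrM.
have s0 : s != 0 by rewrite sqrtr_eq0 -ltNge ltr0n -ltnS prednK // ltnW.
pose b u := g u ^+ 2.
have inlE : \sum_(p : pairs_lt n) diagR g (inl p) * diagR g (inl p) =
    (\sum_(p : pairs_lt n) (b (val p).1 - b (val p).2) ^+ 2) / s ^+ 2.
  by rewrite mulr_suml; apply: eq_bigr => p _ /=; rewrite -/s /b; field.
have inrE : \sum_(p : pairs_lt n) diagR g (inr p) * diagR g (inr p) =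
    (n%:R * \sum_(p : pairs_neq n) b (val p).1 * b (val p).2) / s ^+ 2.
  rewrite (sum_pairs_neq_sym (phi := fun u v => b u * b v)); last first.
    by move=> u v; rewrite mulrC.
  rewrite -sumrMnl mulr_sumr mulr_suml; apply: eq_bigr => p _ /=; rewrite -/s -/c /b.
  transitivity (c ^+ 2 * (g (val p).1 * g (val p).2) ^+ 2 / s ^+ 2); first by field.
  by rewrite c2; field.
rewrite /dotR big_sumType /= inlE inrE -mulrDl diagram_norm_identity -s2.
by rewrite mulrAC divff ?mul1r ?expf_neq0.
Qed.

End RealFrames.

Section ComplexFrames.
Variable C : numClosedFieldType.

Lemma dotC_sdot (E : finType) (u v : E -> C) : dotC u v = sdot Num.conj u v.
Proof. by []. Qed.

Lemma untfC_frame_operator (n : nat) (T : finType) (h : T -> 'I_n -> C) :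
  untfC h -> exists lam : C, forall u v, \sum_t h t u * (h t v)^* = lam * (u == v)%:R.
Proof.
case=> _ [lam _ tight]; exists lam => u v.
have {}tight x : \sum_t sdot Num.conj x (h t) * (sdot Num.conj x (h t))^* =
                 lam * sdot Num.conj x x.
  by rewrite -tight; apply: eq_bigr => t _; rewrite normCK.
case: eqVneq => [<-|uv]; first by rewrite mulr1 (tight_frame_diag conjCK tight).
have /= := tight_frame_offdiag conjCK tight 1 uv.
have /= := tight_frame_offdiag conjCK tight 'i uv.
set P := \sum_t _; rewrite mul1r mulr0 rmorphM /= conjCi => iP /eqP.
rewrite addrC addr_eq0 => /eqP Pc; move: iP; rewrite Pc mulrNN -mulr2n => /eqP.
by rewrite mulrn_eq0 mulf_eq0 (negbTE (neq0Ci C)) => /eqP.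
Qed.

Lemma diagC_sum_eq0 (n : nat) (T : finType) (h : T -> 'I_n -> C) :
  untfC h -> forall e, \sum_t diagC (h t) e = 0.
Proof.
case/untfC_frame_operator=> lam frameE [p|p] /=; rewrite -mulr_suml.
  by rewrite sumrB !frameE !eqxx subrr mul0r.
by rewrite -mulr_sumr frameE (negbTE (valP p)) !mulr0 mul0r.
Qed.

Lemma dotC_diagC (n : nat) (g : 'I_n -> C) : (2 <= n)%N ->
  dotC (diagC g) (diagC g) = dotC g g ^+ 2.
Proof.
move=> n2; set s : C := sqrtC (n.-1)%:R; set c : C := sqrtC n%:R.
have s2 : s ^+ 2 = n%:R - 1 by rewrite sqrtCK -subn1 natrB // ltnW.
have c2 : c ^+ 2 = n%:R by rewrite sqrtCK.
have s0 : s != 0 by rewrite sqrtC_eq0 pnatr_eq0 -lt0n -ltnS prednK // ltnW.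
have sR : s^* = s by rewrite geC0_conj // sqrtC_ge0 ler0n.
have cR : c^* = c by rewrite geC0_conj // sqrtC_ge0 ler0n.
pose b u := g u * (g u)^*.
have bR u : (b u)^* = b u by rewrite /b rmorphM /= conjCK mulrC.
have inlE : \sum_(p : pairs_lt n) diagC g (inl p) * (diagC g (inl p))^* =
    (\sum_(p : pairs_lt n) (b (val p).1 - b (val p).2) ^+ 2) / s ^+ 2.
  rewrite mulr_suml; apply: eq_bigr => p _ /=; rewrite -/s -/(b _) -/(b _).
  by rewrite rmorphM rmorphB /= !bR fmorphV /= sR; field.
have inrE : \sum_(p : pairs_neq n) diagC g (inr p) * (diagC g (inr p))^* =
    (n%:R * \sum_(p : pairs_neq n) b (val p).1 * b (val p).2) / s ^+ 2.
  rewrite mulr_sumr mulr_suml; apply: eq_bigr => p _ /=; rewrite -/s -/c.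
  by rewrite !rmorphM /= fmorphV /= sR cR conjCK /b -c2; field.
rewrite /dotC big_sumType /= inlE inrE -mulrDl diagram_norm_identity -s2.
by rewrite mulrAC divff ?mul1r ?expf_neq0.
Qed.

End ComplexFrames.

Theorem theorem3p1 :
  (* real case *)
  (forall (R : rcfType) (n k p q : nat) (f : 'I_k -> 'I_n -> R)
     (I : {set 'I_k}) (g : 'I_q -> 'I_n -> R),
     (2 <= n)%N -> untfR f -> #|I| = p ->
     (forall j, dotR (g j) (g j) = 1) ->
     untfR (replace_fam f I g) ->
     \sum_(i : 'I_k | i \notin I) \sum_(j : 'I_k | j \notin I)
        dotR (diagR (f j)) (diagR (f i)) <= (q ^ 2)%:R) /\
  (* complex case *)
  (forall (C : numClosedFieldType) (n k p q : nat) (f : 'I_k -> 'I_n -> C)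
     (I : {set 'I_k}) (g : 'I_q -> 'I_n -> C),
     (2 <= n)%N -> untfC f -> #|I| = p ->
     (forall j, dotC (g j) (g j) = 1) ->
     untfC (replace_fam f I g) ->
     \sum_(i : 'I_k | i \notin I) \sum_(j : 'I_k | j \notin I)
        dotC (diagC (f j)) (diagC (f i)) <= (q ^ 2)%:R).
Proof.
split=> [R n k p q f I g n2 _ _ g1 untf_fg | C n k p q f I g n2 _ _ g1 untf_fg].
- have sqr_ge0' (x : R) : 0 <= x * idfun x by rewrite /= -expr2 sqr_ge0.
  apply: (sdot_sum_compl_le sqr_ge0' (y := fun j => diagR (g j))) => [e|j].
    by rewrite -(sum_replace_fam f I g (fun w => diagR w e)) diagR_sum_eq0.
  by rewrite -dotR_sdot dotR_diagR // g1 expr1n.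
- apply: (sdot_sum_compl_le (@mul_conjC_ge0 C) (y := fun j => diagC (g j))) => [e|j].
    by rewrite -(sum_replace_fam f I g (fun w => diagC w e)) diagC_sum_eq0.
  by rewrite -dotC_sdot dotC_diagC // g1 expr1n.
Qed.
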